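(* Let $f$ be an orientation-preserving homeomorphism of the circle $\mathbb T=\mathbb R/\mathbb Z$ whose rotation number $\rho(f)$ is irrational. Assume $f$ is not topologically conjugate to a rotation. Then ${\rm h_{pol}}(f)=1$.
   Context: The rotation number of $f$ is the class in $\mathbb T$ of $\lim_{n\to\infty}F^n(x)/n$ for a lift $F:\mathbb R\to\mathbb R$ of $f$ (independent of $x$). Polynomial entropy: with $d_n^f(x,y)=\max_{0\le k\le n-1}d(f^k(x),f^k(y))$ for the standard metric $d$ on $\mathbb T$ and $G_n^f(\varepsilon)$ the minimal number of $d_n^f$-balls of radius $\varepsilon$ covering $\mathbb T$, ${\rm h_{pol}}(f)=\lim_{\varepsilon\to0}\limsup_{n\to\infty}\frac{\log G_n^f(\varepsilon)}{\log n}$. *)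

From Stdlib Require Import Reals Lra List ClassicalEpsilon.
From Coquelicot Require Import Coquelicot.
Open Scope R_scope.

(* The circle T = R/Z: points are represented by real numbers (mod 1).
   Standard metric on T: distance to the nearest integer of x - y. *)
Definition dT (x y : R) : R :=
  Rmin (frac_part (x - y)) (1 - frac_part (x - y)).

Definition op_circle_homeo_lift (F : R -> R) : Prop :=
  (forall x, continuity_pt F x) /\
  (forall x y, x < y -> F x < F y) /\
  (forall x, F (x + 1) = F x + 1).

Definition circle_homeo_lift (H : R -> R) : Prop :=
  (forall x, continuity_pt H x) /\
  (((forall x y, x < y -> H x < H y) /\ (forall x, H (x + 1) = H x + 1)) \/
   ((forall x y, x < y -> H y < H x) /\ (forall x, H (x + 1) = H x - 1))).

(* The circle map f (with lift F) is topologically conjugate to a rotation: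
   there is a homeomorphism h of T (lift H) and alpha with h o f = R_alpha o h on T. *)
Definition conj_to_rotation (F : R -> R) : Prop :=
  exists (H : R -> R) (alpha : R), circle_homeo_lift H /\
    forall x, exists k : Z, H (F x) = H x + alpha + IZR k.

Fixpoint dn (F : R -> R) (n : nat) (x y : R) : R :=
  match n with
  | O => 0
  | S m => Rmax (dn F m x y) (dT (Nat.iter m F x) (Nat.iter m F y))
  end.

Definition covers (F : R -> R) (n : nat) (eps : R) (N : nat) : Prop :=
  exists l : list R, length l = N /\
    forall x : R, exists c, In c l /\ dn F n x c < eps.

Definition Gn (F : R -> R) (n : nat) (eps : R) : nat :=
  epsilon (inhabits 0%nat)
    (fun N => covers F n eps N /\ forall M, covers F n eps M -> (N <= M)%nat).

Definition hpol_eps (F : R -> R) (eps : R) : Rbar :=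
  LimSup_seq (fun n => ln (INR (Gn F n eps)) / ln (INR n)).

Definition hpol_eq (F : R -> R) (l : R) : Prop :=
  forall delta, 0 < delta -> exists eps0, 0 < eps0 /\
    forall eps, 0 < eps < eps0 ->
      exists r, hpol_eps F eps = Finite r /\ Rabs (r - l) < delta.

(* Since rho is irrational, the orbit of 0 is ordered on the line like the orbit of 0 under the
   rotation by rho, so Poincare's map H x = sup { n rho + m | F^n 0 + m <= x } is a continuous
   nondecreasing degree-one map with H o F = H + rho.  If H were strictly increasing it would
   conjugate f to the rotation; hence H is constant on some interval J, and J is wandering.
   For eps <= |J| / 2 and every k < n, some d_n-ball of radius eps must contain a point whose
   k-th iterate is the midpoint of J, and no center can serve two values of k, so G_n(eps) >= n.
   Conversely, since the maps floor (K F^k) are monotone, points of [0, 1) with the same sum of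
   these codes over k < n stay within 1/K < eps for n steps, and there are at most n K + 1 such
   sums, so G_n(eps) <= n K + 1.  Hence log G_n(eps) / log n -> 1 for all small eps. *)

From Stdlib Require Import Reals.
From Stdlib Require Import Lra Lia List ZArith Wf_nat ClassicalEpsilon Classical.
From Coquelicot Require Import Coquelicot.
Open Scope R_scope.

Lemma Int_part_bound r : IZR (Int_part r) <= r < IZR (Int_part r) + 1.
Proof. destruct (base_Int_part r). lra. Qed.

Lemma Int_part_unique z r : IZR z <= r < IZR z + 1 -> Int_part r = z.
Proof. intros Hr. symmetry. apply Int_part_spec. lra. Qed.

Lemma Int_part_plus_IZR r m : Int_part (r + IZR m) = (Int_part r + m)%Z.
Proof.
  apply Int_part_unique. rewrite plus_IZR. pose proof (Int_part_bound r). lra.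
Qed.

Lemma Int_part_le x y : x <= y -> (Int_part x <= Int_part y)%Z.
Proof.
  intros Hxy. pose proof (Int_part_bound x). pose proof (Int_part_bound y).
  assert (Int_part x < Int_part y + 1)%Z by (apply lt_IZR; rewrite plus_IZR; simpl; lra).
  lia.
Qed.

Lemma frac_part_plus_IZR r m : frac_part (r + IZR m) = frac_part r.
Proof. unfold frac_part. rewrite Int_part_plus_IZR, plus_IZR. ring. Qed.

Lemma dT_plus_IZR_l a b m : dT (a + IZR m) b = dT a b.
Proof.
  unfold dT. replace (a + IZR m - b) with ((a - b) + IZR m) by ring.
  now rewrite frac_part_plus_IZR.
Qed.

Lemma dT_le_Rabs a b : dT a b <= Rabs (a - b).
Proof.
  unfold dT, frac_part. pose proof (Int_part_bound (a - b)).
  destruct (Z_lt_le_dec (Int_part (a - b)) 0) as [Hneg | Hpos].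
  - assert (IZR (Int_part (a - b)) <= -1) by (apply IZR_le; lia).
    apply Rle_trans with (1 - (a - b - IZR (Int_part (a - b)))); [apply Rmin_r |].
    rewrite Rabs_left by lra. lra.
  - apply IZR_le in Hpos.
    apply Rle_trans with (a - b - IZR (Int_part (a - b))); [apply Rmin_l |].
    rewrite Rabs_right by lra. lra.
Qed.

Lemma dT_lt_exists_IZR a b eps : dT a b < eps -> exists j, Rabs (a - b - IZR j) < eps.
Proof.
  unfold dT, frac_part. intros Hd. pose proof (Int_part_bound (a - b)).
  set (f := a - b - IZR (Int_part (a - b))) in *.
  destruct (Rle_or_lt f (1 - f)).
  - rewrite Rmin_left in Hd by lra. exists (Int_part (a - b)).
    unfold f in *. rewrite Rabs_right; lra.
  - rewrite Rmin_right in Hd by lra. exists (Int_part (a - b) + 1)%Z.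
    rewrite plus_IZR. unfold f in *. rewrite Rabs_left; simpl; lra.
Qed.

Section Lift.

Variable F : R -> R.
Hypothesis HF : op_circle_homeo_lift F.

Lemma lift_plus_IZR x m : F (x + IZR m) = F x + IZR m.
Proof.
  destruct HF as [_ [_ HF1]]. revert x.
  induction m using Z.peano_ind; intros x.
  - now rewrite !Rplus_0_r.
  - rewrite succ_IZR, <- Rplus_assoc, HF1, IHm. ring.
  - replace (IZR (Z.pred m)) with (IZR m - 1) by (unfold Z.pred; rewrite plus_IZR; simpl; ring).
    specialize (IHm x). specialize (HF1 (x + (IZR m - 1))).
    replace (x + (IZR m - 1) + 1) with (x + IZR m) in HF1 by ring. lra.
Qed.

Lemma iter_plus_IZR k x m : Nat.iter k F (x + IZR m) = Nat.iter k F x + IZR m.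
Proof.
  revert x. induction k as [|k IHk]; intros x; simpl; [reflexivity |].
  now rewrite IHk, lift_plus_IZR.
Qed.

Lemma iter_lt k x y : x < y -> Nat.iter k F x < Nat.iter k F y.
Proof.
  induction k as [|k IHk]; intros Hxy; simpl; [exact Hxy |]. apply HF. now apply IHk.
Qed.

Lemma iter_le k x y : x <= y -> Nat.iter k F x <= Nat.iter k F y.
Proof. intros [Hxy | <-]; [left; now apply iter_lt | lra]. Qed.

Lemma iter_sub_iter0_bound k x : x - 1 <= Nat.iter k F x - Nat.iter k F 0 <= x + 1.
Proof.
  pose proof (Int_part_bound x).
  pose proof (iter_le k (0 + IZR (Int_part x)) x ltac:(lra)) as Hlo.
  pose proof (iter_le k x (0 + IZR (Int_part x + 1)) ltac:(rewrite plus_IZR; lra)) as Hhi.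
  rewrite iter_plus_IZR in Hlo, Hhi. rewrite plus_IZR in Hhi. lra.
Qed.

Lemma lift_surjective w : exists z, F z = w.
Proof.
  set (a := IZR (Int_part (w - F 0))). pose proof (Int_part_bound (w - F 0)).
  assert (Fa : F a = F 0 + a) by (unfold a; rewrite <- lift_plus_IZR; f_equal; ring).
  assert (Fa1 : F (a + 1) = F 0 + a + 1) by (destruct HF as [_ [_ HF1]]; rewrite HF1; lra).
  destruct (Req_dec (F a) w) as [Ew | Nw]; [eauto |].
  destruct (IVT (fun t => F t - w) a (a + 1)) as [z [_ Hz]].
  - intro t. apply continuity_pt_minus; [apply HF | apply continuity_pt_const; now intros u v].
  - lra.
  - unfold a in *. lra.
  - unfold a in *. lra.
  - exists z. lra.
Qed.

Lemma iter_surjective k w : exists z, Nat.iter k F z = w.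
Proof.
  revert w. induction k as [|k IHk]; intros w; [now exists w |].
  destruct (lift_surjective w) as [u <-]. destruct (IHk u) as [z <-]. now exists z.
Qed.

End Lift.

Lemma is_lim_seq_inv_INR : is_lim_seq (fun n => / INR n) 0.
Proof.
  pose proof (is_lim_seq_inv INR p_infty is_lim_seq_INR ltac:(discriminate)) as H.
  exact H.
Qed.

Lemma is_lim_seq_shift_div_INR (u : nat -> R) (l c : R) :
  is_lim_seq (fun n => u n / INR n) l -> is_lim_seq (fun n => (u n + c) / INR n) l.
Proof.
  intros Hu.
  replace (Finite l) with (Finite (l + c * 0)) by (f_equal; ring).
  apply (is_lim_seq_ext (fun n => u n / INR n + c * / INR n)); [intros n; unfold Rdiv; ring |].
  apply is_lim_seq_plus'; [exact Hu |].
  apply (is_lim_seq_scal_l _ c _ is_lim_seq_inv_INR).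
Qed.

Section RotationNumber.

Variable F : R -> R.
Variable rho : R.
Hypothesis HF : op_circle_homeo_lift F.
Hypothesis Hrho : is_lim_seq (fun n => Nat.iter n F 0 / INR n) rho.

Lemma rotation_number_at x : is_lim_seq (fun n => (Nat.iter n F x - x) / INR n) rho.
Proof.
  apply (is_lim_seq_le_le (fun n => (Nat.iter n F 0 + -1) / INR n) _
           (fun n => (Nat.iter n F 0 + 1) / INR n));
    [| now apply is_lim_seq_shift_div_INR ..].
  intros n. pose proof (iter_sub_iter0_bound F HF n x).
  assert (0 <= / INR n) by (destruct n; [simpl; rewrite Rinv_0; lra |
                                      left; apply Rinv_0_lt_compat, lt_0_INR; lia]).
  unfold Rdiv. split; apply Rmult_le_compat_r; lra.
Qed.

Lemma iter_mul_ge q x p k :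
  x + IZR p <= Nat.iter q F x -> x + IZR (Z.of_nat k * p) <= Nat.iter (k * q) F x.
Proof.
  intros Hq. induction k as [|k IHk]; [simpl; lra |].
  replace (S k * q)%nat with (q + k * q)%nat by lia. rewrite Nat.iter_add.
  pose proof (iter_le F HF q _ _ IHk) as Hk. rewrite iter_plus_IZR in Hk by auto.
  replace (Z.of_nat (S k) * p)%Z with (Z.of_nat k * p + p)%Z by lia.
  rewrite plus_IZR. lra.
Qed.

Lemma iter_mul_le q x p k :
  Nat.iter q F x <= x + IZR p -> Nat.iter (k * q) F x <= x + IZR (Z.of_nat k * p).
Proof.
  intros Hq. induction k as [|k IHk]; [simpl; lra |].
  replace (S k * q)%nat with (q + k * q)%nat by lia. rewrite Nat.iter_add.
  pose proof (iter_le F HF q _ _ IHk) as Hk. rewrite iter_plus_IZR in Hk by auto.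
  replace (Z.of_nat (S k) * p)%Z with (Z.of_nat k * p + p)%Z by lia.
  rewrite plus_IZR. lra.
Qed.

Lemma rotation_number_mul q x : (0 < q)%nat ->
  is_lim_seq (fun k => (Nat.iter (S k * q) F x - x) / INR (S k * q)) rho.
Proof.
  intros Hq. apply (is_lim_seq_subseq (fun n => (Nat.iter n F x - x) / INR n));
    [| apply rotation_number_at].
  intros P [N HN]. exists N. intros n Hn. apply HN. nia.
Qed.

Lemma multiple_div_INR q k p : (0 < q)%nat ->
  IZR (Z.of_nat (S k) * p) / INR (S k * q) = IZR p / INR q.
Proof.
  intros Hq. rewrite mult_IZR, <- INR_IZR_INZ, mult_INR.
  assert (0 < INR q) by (apply lt_0_INR; lia).
  field. split; [lra | apply not_0_INR; lia].
Qed.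

Lemma rotation_number_ge q x p : (0 < q)%nat ->
  x + IZR p <= Nat.iter q F x -> IZR p <= INR q * rho.
Proof.
  intros Hq Hp. assert (0 < INR q) by (apply lt_0_INR; lia).
  assert (IZR p / INR q <= rho).
  { refine (is_lim_seq_le (fun _ => IZR p / INR q) _ _ _ _
              (is_lim_seq_const _) (rotation_number_mul q x Hq)).
    intros k. rewrite <- (multiple_div_INR q k p Hq).
    apply Rmult_le_compat_r; [left; apply Rinv_0_lt_compat, lt_0_INR; nia |].
    pose proof (iter_mul_ge q x p (S k) Hp). lra. }
  apply Rmult_le_reg_r with (/ INR q); [now apply Rinv_0_lt_compat |].
  replace (INR q * rho * / INR q) with rho by (field; lra). exact H0.
Qed.

Lemma rotation_number_le q x p : (0 < q)%nat ->
  Nat.iter q F x <= x + IZR p -> INR q * rho <= IZR p.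
Proof.
  intros Hq Hp. assert (0 < INR q) by (apply lt_0_INR; lia).
  assert (rho <= IZR p / INR q).
  { refine (is_lim_seq_le _ (fun _ => IZR p / INR q) _ _ _
              (rotation_number_mul q x Hq) (is_lim_seq_const _)).
    intros k. rewrite <- (multiple_div_INR q k p Hq).
    apply Rmult_le_compat_r; [left; apply Rinv_0_lt_compat, lt_0_INR; nia |].
    pose proof (iter_mul_le q x p (S k) Hp). lra. }
  apply Rmult_le_reg_r with (/ INR q); [now apply Rinv_0_lt_compat |].
  replace (INR q * rho * / INR q) with rho by (field; lra). exact H0.
Qed.

End RotationNumber.

Definition irrational (r : R) : Prop := ~ exists p q : Z, q <> 0%Z /\ r = IZR p / IZR q.

Lemma irrational_mult_neq_IZR r n m : irrational r -> n <> 0%Z -> IZR n * r <> IZR m.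
Proof.
  intros Hr Hn E. apply Hr. exists m, n. split; [exact Hn |].
  rewrite <- E. field. now apply not_0_IZR.
Qed.

Lemma irrational_lin_inj r (n n' : nat) (m m' : Z) : irrational r ->
  INR n * r + IZR m = INR n' * r + IZR m' -> n = n' /\ m = m'.
Proof.
  intros Hr E. rewrite !INR_IZR_INZ in E.
  assert (Hn : Z.of_nat n = Z.of_nat n').
  { apply NNPP. intros Hn. apply (irrational_mult_neq_IZR r (Z.of_nat n - Z.of_nat n') (m' - m) Hr);
      [lia | rewrite !minus_IZR; lra]. }
  split; [lia |]. rewrite Hn in E. apply eq_IZR. lra.
Qed.

Section IrrationalRotation.

Variable F : R -> R.
Variable rho : R.
Hypothesis HF : op_circle_homeo_lift F.
Hypothesis Hrho : is_lim_seq (fun n => Nat.iter n F 0 / INR n) rho.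
Hypothesis Hirr : irrational rho.

Lemma irrational_INR_neq q p : (0 < q)%nat -> INR q * rho <> IZR p.
Proof. intros Hq. rewrite INR_IZR_INZ. apply irrational_mult_neq_IZR; [exact Hirr | lia]. Qed.

Lemma iter_lt_shift_iff q x p : (0 < q)%nat ->
  Nat.iter q F x < x + IZR p <-> INR q * rho < IZR p.
Proof.
  intros Hq. pose proof (irrational_INR_neq q p Hq) as Hneq. split; intros H.
  - pose proof (rotation_number_le F rho HF Hrho q x p Hq ltac:(lra)). lra.
  - destruct (Rlt_or_le (Nat.iter q F x) (x + IZR p)) as [Hlt | Hge]; [exact Hlt |].
    pose proof (rotation_number_ge F rho HF Hrho q x p Hq Hge). lra.
Qed.

Lemma iter_gt_shift_iff q x p : (0 < q)%nat ->
  x + IZR p < Nat.iter q F x <-> IZR p < INR q * rho.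
Proof.
  intros Hq. pose proof (irrational_INR_neq q p Hq) as Hneq. split; intros H.
  - pose proof (rotation_number_ge F rho HF Hrho q x p Hq ltac:(lra)). lra.
  - destruct (Rlt_or_le (x + IZR p) (Nat.iter q F x)) as [Hlt | Hle]; [exact Hlt |].
    pose proof (rotation_number_le F rho HF Hrho q x p Hq Hle). lra.
Qed.

Lemma orbit_lt_of_rotation_lt n n' m m' :
  INR n * rho + IZR m < INR n' * rho + IZR m' -> Nat.iter n F 0 + IZR m < Nat.iter n' F 0 + IZR m'.
Proof.
  intros H. destruct (le_lt_dec n' n) as [Hle | Hlt].
  - replace n with ((n - n') + n')%nat in * by lia. rewrite Nat.iter_add, plus_INR in *.
    destruct (Nat.eq_dec (n - n') 0) as [E | Hd].
    + rewrite E in *. simpl in *. lra.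
    + pose proof (proj2 (iter_lt_shift_iff (n - n') (Nat.iter n' F 0) (m' - m) ltac:(lia))).
      rewrite minus_IZR in *. lra.
  - replace n' with ((n' - n) + n)%nat in * by lia. rewrite Nat.iter_add, plus_INR in *.
    pose proof (proj2 (iter_gt_shift_iff (n' - n) (Nat.iter n F 0) (m - m') ltac:(lia))).
    rewrite minus_IZR in *. lra.
Qed.

Lemma orbit_lt_iff n n' m m' :
  Nat.iter n F 0 + IZR m < Nat.iter n' F 0 + IZR m' <-> INR n * rho + IZR m < INR n' * rho + IZR m'.
Proof.
  split; [| apply orbit_lt_of_rotation_lt]. intros H.
  destruct (Rtotal_order (INR n * rho + IZR m) (INR n' * rho + IZR m')) as [Hlt | [E | Hgt]];
    [exact Hlt | | ].
  - destruct (irrational_lin_inj rho n n' m m' Hirr E). subst. lra.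
  - pose proof (orbit_lt_of_rotation_lt _ _ _ _ Hgt). lra.
Qed.

Lemma orbit_le_iff n n' m m' :
  Nat.iter n F 0 + IZR m <= Nat.iter n' F 0 + IZR m' <-> INR n * rho + IZR m <= INR n' * rho + IZR m'.
Proof.
  pose proof (orbit_lt_iff n' n m' m) as Hiff.
  split; intros Hle; apply Rnot_lt_le; intros Hc; [apply (proj2 Hiff) in Hc | apply (proj1 Hiff) in Hc];
    lra.
Qed.

End IrrationalRotation.

Lemma Int_part_div_bound a g : 0 < g ->
  IZR (Int_part (a / g)) * g <= a < IZR (Int_part (a / g)) * g + g.
Proof.
  intros Hg. pose proof (Int_part_bound (a / g)) as Hk.
  assert (E : a / g * g = a) by (field; lra).
  split.
  - rewrite <- E at 2. apply Rmult_le_compat_r; lra.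
  - replace (IZR (Int_part (a / g)) * g + g) with ((IZR (Int_part (a / g)) + 1) * g) by ring.
    rewrite <- E at 1. apply Rmult_lt_compat_r; lra.
Qed.

Section Density.

Variable rho : R.
Hypothesis Hirr : irrational rho.

(* Reduce 1 modulo g: the remainder r = 1 - k g lies in (0, g), so r or g - r is at most g / 2. *)
Lemma rotation_group_halve n m : 0 < IZR n * rho + IZR m < 1 ->
  exists n' m' : Z, 0 < IZR n' * rho + IZR m' <= (IZR n * rho + IZR m) / 2.
Proof.
  set (g := IZR n * rho + IZR m). intros Hg.
  assert (Hn : n <> 0%Z).
  { intros ->. unfold g in Hg. rewrite Rmult_0_l, Rplus_0_l in Hg.
    assert (0 < m < 1)%Z by (split; apply lt_IZR; simpl; lra). lia. }
  set (k := Int_part (1 / g)). pose proof (Int_part_div_bound 1 g ltac:(lra)) as Hk1. fold k in Hk1.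
  assert (Hk0 : k <> 0%Z) by (intros E; rewrite E in Hk1; simpl in Hk1; lra).
  assert (Hr : IZR k * g <> 1).
  { intros E. apply (irrational_mult_neq_IZR rho (k * n) (1 - k * m) Hirr); [lia |].
    rewrite mult_IZR, minus_IZR, mult_IZR. unfold g in E. lra. }
  destruct (Rle_or_lt (1 - IZR k * g) (g / 2)).
  - exists (- (k * n))%Z, (1 - k * m)%Z.
    rewrite opp_IZR, minus_IZR, !mult_IZR. unfold g in *. lra.
  - exists (n + k * n)%Z, (m + k * m - 1)%Z.
    rewrite minus_IZR, !plus_IZR, !mult_IZR. unfold g in *. lra.
Qed.

Lemma rotation_group_small eps : 0 < eps -> exists n m : Z, 0 < IZR n * rho + IZR m < eps.
Proof.
  intros Heps.
  assert (Hhalf : forall k, exists n m : Z,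
             0 < IZR n * rho + IZR m < 1 /\ IZR n * rho + IZR m <= (/ 2) ^ k).
  { induction k as [|k [n [m [Hg Hgk]]]].
    - exists 1%Z, (- Int_part rho)%Z. rewrite opp_IZR. pose proof (Int_part_bound rho).
      assert (rho <> IZR (Int_part rho)).
      { intros E. apply (irrational_mult_neq_IZR rho 1 (Int_part rho) Hirr); [lia | lra]. }
      simpl. lra.
    - destruct (rotation_group_halve n m Hg) as [n' [m' Hg']].
      exists n', m'. simpl. lra. }
  destruct (pow_lt_1_zero (/ 2) ltac:(rewrite Rabs_right; lra) eps Heps) as [N HN].
  destruct (Hhalf N) as [n [m [Hg HgN]]]. exists n, m.
  specialize (HN N (le_n N)). rewrite Rabs_right in HN by (left; apply pow_lt; lra). lra.
Qed.

End Density.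

Lemma multiples_dense g t eps : 0 < g < eps ->
  exists (k : nat) (j : Z), t < INR k * g + IZR j < t + eps.
Proof.
  intros Hg. set (f := t - IZR (Int_part t)). pose proof (Int_part_bound t).
  set (i := Int_part (f / g)). pose proof (Int_part_div_bound f g ltac:(lra)) as Hig. fold i in Hig.
  assert (Hi0 : (0 <= i)%Z).
  { rewrite <- (Int_part_unique 0 0) by (simpl; lra). apply Int_part_le.
    unfold Rdiv. apply Rmult_le_pos; [unfold f; lra | left; apply Rinv_0_lt_compat; lra]. }
  exists (S (Z.to_nat i)), (Int_part t).
  rewrite S_INR, INR_IZR_INZ, Z2Nat.id by exact Hi0. unfold f in *. lra.
Qed.

Lemma rotation_orbit_dense rho : irrational rho -> forall t eps, 0 < eps ->
  exists (n : nat) (m : Z), t < INR n * rho + IZR m < t + eps.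
Proof.
  intros Hirr t eps Heps.
  destruct (rotation_group_small rho Hirr eps Heps) as [n [m Hg]].
  destruct (Z_le_gt_dec 0 n) as [Hn | Hn].
  - destruct (multiples_dense _ t eps Hg) as [k [j Hk]].
    exists (Z.to_nat (Z.of_nat k * n)), (Z.of_nat k * m + j)%Z.
    rewrite INR_IZR_INZ, Z2Nat.id by lia. rewrite INR_IZR_INZ in Hk.
    rewrite plus_IZR, !mult_IZR. lra.
  - destruct (multiples_dense _ (- t - eps) eps Hg) as [k [j Hk]].
    exists (Z.to_nat (Z.of_nat k * - n)), (- (Z.of_nat k * m) - j)%Z.
    rewrite INR_IZR_INZ, Z2Nat.id by lia. rewrite INR_IZR_INZ in Hk.
    rewrite minus_IZR, opp_IZR, !mult_IZR, opp_IZR. lra.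
Qed.

Definition poincare_set (F : R -> R) (rho x r : R) : Prop :=
  exists (n : nat) (m : Z), r = INR n * rho + IZR m /\ Nat.iter n F 0 + IZR m <= x.

Definition poincare_map (F : R -> R) (rho x : R) : R :=
  epsilon (inhabits 0) (fun L => is_lub (poincare_set F rho x) L).

Section Semiconjugacy.

Variable F : R -> R.
Variable rho : R.
Hypothesis HF : op_circle_homeo_lift F.
Hypothesis Hrho : is_lim_seq (fun n => Nat.iter n F 0 / INR n) rho.
Hypothesis Hirr : irrational rho.

Let H := poincare_map F rho.

Lemma poincare_map_lub x : is_lub (poincare_set F rho x) (H x).
Proof.
  unfold H, poincare_map. apply epsilon_spec. pose proof (Int_part_bound x).
  assert (Hbound : bound (poincare_set F rho x)).
  { exists (IZR (Int_part x) + 1). intros r [n [m [-> Hnm]]].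
    assert (Hlt : Nat.iter n F 0 + IZR m < Nat.iter 0 F 0 + IZR (Int_part x + 1))
      by (rewrite plus_IZR; simpl; lra).
    apply (orbit_lt_iff F rho HF Hrho Hirr) in Hlt. rewrite plus_IZR in Hlt. simpl in Hlt. lra. }
  assert (Hne : exists r, poincare_set F rho x r).
  { exists (IZR (Int_part x)), 0%nat, (Int_part x). simpl. split; [ring | lra]. }
  destruct (completeness _ Hbound Hne) as [L HL]. now exists L.
Qed.

Lemma poincare_map_ge x n m : Nat.iter n F 0 + IZR m <= x -> INR n * rho + IZR m <= H x.
Proof. intros Hnm. apply (proj1 (poincare_map_lub x)). now exists n, m. Qed.

Lemma poincare_map_le x b :
  (forall n m, Nat.iter n F 0 + IZR m <= x -> INR n * rho + IZR m <= b) -> H x <= b.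
Proof. intros Hb. apply (proj2 (poincare_map_lub x)). intros r [n [m [-> Hnm]]]. auto. Qed.

Lemma poincare_map_monotone x y : x <= y -> H x <= H y.
Proof. intros Hxy. apply poincare_map_le. intros n m Hnm. apply poincare_map_ge. lra. Qed.

Lemma poincare_map_plus_IZR x j : H (x + IZR j) = H x + IZR j.
Proof.
  apply Rle_antisym.
  - apply poincare_map_le. intros n m Hnm.
    pose proof (poincare_map_ge x n (m - j)) as Hge. rewrite minus_IZR in Hge. lra.
  - enough (H x <= H (x + IZR j) - IZR j) by lra.
    apply poincare_map_le. intros n m Hnm.
    pose proof (poincare_map_ge (x + IZR j) n (m + j)) as Hge. rewrite plus_IZR in Hge. lra.
Qed.

Lemma poincare_map_lift x : H (F x) = H x + rho.
Proof.
  apply Rle_antisym.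
  - apply poincare_map_le. intros n m Hnm. apply Rnot_lt_le. intros Hgt.
    destruct (rotation_orbit_dense rho Hirr (H x) (INR n * rho + IZR m - rho - H x)
                ltac:(lra)) as [n' [m' Hn']].
    assert (Hx : x < Nat.iter n' F 0 + IZR m').
    { apply Rnot_le_lt. intros Hle. pose proof (poincare_map_ge _ _ _ Hle). lra. }
    assert (Hlt : Nat.iter n F 0 + IZR m < Nat.iter (S n') F 0 + IZR m').
    { simpl. rewrite <- (lift_plus_IZR F HF). apply Rle_lt_trans with (F x); [exact Hnm |].
      now apply HF. }
    apply (orbit_lt_iff F rho HF Hrho Hirr) in Hlt. rewrite S_INR in Hlt. lra.
  - enough (H x <= H (F x) - rho) by lra.
    apply poincare_map_le. intros n m Hnm.
    assert (Hle : Nat.iter (S n) F 0 + IZR m <= F x).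
    { simpl. rewrite <- (lift_plus_IZR F HF). apply (iter_le F HF 1 _ _ Hnm). }
    pose proof (poincare_map_ge _ _ _ Hle). rewrite S_INR in *. lra.
Qed.

Lemma poincare_map_iter k x : H (Nat.iter k F x) = H x + INR k * rho.
Proof.
  induction k as [|k IHk]; simpl Nat.iter; [simpl; ring |].
  rewrite poincare_map_lift, IHk, S_INR. ring.
Qed.

Lemma poincare_map_continuous x : continuity_pt H x.
Proof.
  intros eps Heps.
  destruct (rotation_orbit_dense rho Hirr (H x - eps) eps Heps) as [n1 [m1 H1]].
  destruct (rotation_orbit_dense rho Hirr (H x) eps Heps) as [n2 [m2 H2]].
  set (a := Nat.iter n1 F 0 + IZR m1). set (b := Nat.iter n2 F 0 + IZR m2).
  assert (Hb : x < b).
  { apply Rnot_le_lt. intros Hle. pose proof (poincare_map_ge _ _ _ Hle). lra. }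
  assert (Hleb : H b <= INR n2 * rho + IZR m2).
  { apply poincare_map_le. intros n m Hnm. now apply (orbit_le_iff F rho HF Hrho Hirr). }
  assert (Ha : a < x).
  { apply Rnot_le_lt. intros Hle.
    assert (H x <= INR n1 * rho + IZR m1); [| lra].
    apply poincare_map_le. intros n m Hnm. apply (orbit_le_iff F rho HF Hrho Hirr).
    unfold a in Hle. lra. }
  exists (Rmin (x - a) (b - x)). split; [apply Rmin_pos; lra |].
  intros y [_ Hy]. simpl in Hy. unfold R_dist in *.
  pose proof (Rmin_l (x - a) (b - x)). pose proof (Rmin_r (x - a) (b - x)).
  apply Rabs_def2 in Hy.
  pose proof (poincare_map_ge y n1 m1 ltac:(fold a; lra)).
  pose proof (poincare_map_monotone y b ltac:(lra)).
  apply Rabs_def1; lra.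
Qed.

Lemma poincare_map_strict_conj :
  (forall x y, x < y -> H x < H y) -> conj_to_rotation F.
Proof.
  intros Hstrict. exists H, rho. split.
  - split; [exact poincare_map_continuous |]. left. split; [exact Hstrict |].
    intros x. exact (poincare_map_plus_IZR x 1).
  - intros x. exists 0%Z. rewrite poincare_map_lift. simpl. ring.
Qed.

End Semiconjugacy.

Definition wandering_interval (F : R -> R) (x y : R) : Prop :=
  forall d u j1 j2, (0 < d)%nat -> x <= u + IZR j1 <= y -> x <= Nat.iter d F u + IZR j2 <= y -> False.

Lemma poincare_map_flat_wandering F (rho x y : R) :
  op_circle_homeo_lift F -> is_lim_seq (fun n => Nat.iter n F 0 / INR n) rho -> irrational rho ->
  x <= y -> poincare_map F rho x = poincare_map F rho y -> wandering_interval F x y.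
Proof.
  intros HF Hrho Hirr Hxy Heq d u j1 j2 Hd Hu Hv.
  set (H := poincare_map F rho).
  assert (Hflat : forall z, x <= z <= y -> H z = H x).
  { intros z Hz. pose proof (poincare_map_monotone F rho HF Hrho Hirr x z (proj1 Hz)).
    pose proof (poincare_map_monotone F rho HF Hrho Hirr z y (proj2 Hz)). unfold H. lra. }
  pose proof (Hflat _ Hu) as E1. pose proof (Hflat _ Hv) as E2.
  unfold H in E1, E2.
  rewrite (poincare_map_plus_IZR F rho HF Hrho Hirr) in E1, E2.
  rewrite (poincare_map_iter F rho HF Hrho Hirr) in E2.
  apply (irrational_INR_neq rho Hirr d (j1 - j2) Hd). rewrite minus_IZR. lra.
Qed.

Lemma not_conj_wandering_interval F (rho : R) :
  op_circle_homeo_lift F -> is_lim_seq (fun n => Nat.iter n F 0 / INR n) rho -> irrational rho ->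
  ~ conj_to_rotation F -> exists x y, x < y /\ wandering_interval F x y.
Proof.
  intros HF Hrho Hirr Hnc.
  destruct (not_all_ex_not _ _ (fun Hs => Hnc (poincare_map_strict_conj F rho HF Hrho Hirr Hs)))
    as [x Hx].
  destruct (not_all_ex_not _ _ Hx) as [y Hy].
  destruct (imply_to_and _ _ Hy) as [Hxy Hnlt].
  exists x, y. split; [exact Hxy |].
  apply (poincare_map_flat_wandering F rho); [auto .. | lra |].
  pose proof (poincare_map_monotone F rho HF Hrho Hirr x y ltac:(lra)). lra.
Qed.

Lemma dn_lt_iff F n x c eps : 0 < eps ->
  dn F n x c < eps <-> forall k, (k < n)%nat -> dT (Nat.iter k F x) (Nat.iter k F c) < eps.
Proof.
  intros Heps. induction n as [|n IHn]; simpl.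
  - split; [intros _ k Hk; lia | intros _; exact Heps].
  - rewrite Rmax_Rlt, IHn. split.
    + intros [Hlt Hn] k Hk. destruct (Nat.eq_dec k n) as [-> | Hkn]; [exact Hn | apply Hlt; lia].
    + intros Hall. split; [intros k Hk |]; apply Hall; lia.
Qed.

Lemma dn_plus_IZR_l F n x m c : op_circle_homeo_lift F -> dn F n (x + IZR m) c = dn F n x c.
Proof.
  intros HF. induction n as [|n IHn]; simpl; [reflexivity |].
  now rewrite IHn, iter_plus_IZR, dT_plus_IZR_l.
Qed.

(* Each k < n needs its own ball: a center whose k-th iterate is eps-close to the midpoint of
   the wandering interval cannot do the same for another k. *)
Lemma covers_ge_of_wandering F x y eps n N : op_circle_homeo_lift F -> wandering_interval F x y ->
  0 < eps -> 2 * eps <= y - x -> covers F n eps N -> (n <= N)%nat.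
Proof.
  intros HF Hw Heps Hxy [l [Hlen Hcov]].
  set (w := (x + y) / 2).
  set (P := fun k c => In c l /\ dT w (Nat.iter k F c) < eps).
  assert (Hreturn : forall a b c, (a < b)%nat -> P a c -> P b c -> False).
  { intros a b c Hab [_ Ha] [_ Hb].
    destruct (dT_lt_exists_IZR _ _ _ Ha) as [j1 H1]. destruct (dT_lt_exists_IZR _ _ _ Hb) as [j2 H2].
    apply Rabs_def2 in H1, H2.
    apply (Hw (b - a)%nat (Nat.iter a F c) j1 j2); [lia | unfold w in *; lra |].
    rewrite <- Nat.iter_add. replace (b - a + a)%nat with b by lia. unfold w in *. lra. }
  set (center := fun k => epsilon (inhabits 0) (P k)).
  assert (Hcenter : forall k, (k < n)%nat -> P k (center k)).
  { intros k Hk. apply epsilon_spec.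
    destruct (iter_surjective F HF k w) as [p Hp]. destruct (Hcov p) as [c [Hc Hpc]].
    exists c. split; [exact Hc |]. rewrite <- Hp. now apply (proj1 (dn_lt_iff F n p c eps Heps)). }
  rewrite <- Hlen, <- (length_seq n 0), <- (length_map center).
  apply NoDup_incl_length.
  - apply NoDup_map_NoDup_ForallPairs; [| apply seq_NoDup].
    intros a b Ha Hb E. apply in_seq in Ha, Hb.
    destruct (Nat.lt_total a b) as [Hab | [Hab | Hab]]; [exfalso | exact Hab | exfalso].
    + apply (Hreturn a b (center a) Hab); [| rewrite E]; apply Hcenter; lia.
    + apply (Hreturn b a (center a) Hab); [rewrite E |]; apply Hcenter; lia.
  - intros c Hc. apply in_map_iff in Hc. destruct Hc as [k [<- Hk]]. apply in_seq in Hk.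
    apply Hcenter. lia.
Qed.

(* The codes floor (K F^k x) are nondecreasing in x and grow by at most K on [0, 1), so their
   sum over k < n takes at most n K + 1 values there; points with the same sum have the same
   codes, hence all their first n iterates within 1 / K of each other. *)
Definition itinerary_code (F : R -> R) (K k : nat) (x : R) : Z := Int_part (INR K * Nat.iter k F x).

Fixpoint itinerary_sum (F : R -> R) (K n : nat) (x : R) : Z :=
  match n with
  | O => 0%Z
  | S m => (itinerary_sum F K m x + itinerary_code F K m x)%Z
  end.

Section Itinerary.

Variable F : R -> R.
Hypothesis HF : op_circle_homeo_lift F.
Variable K : nat.

Lemma itinerary_code_le k x y : x <= y -> (itinerary_code F K k x <= itinerary_code F K k y)%Z.
Proof.
  intros Hxy. apply Int_part_le, Rmult_le_compat_l; [apply pos_INR | now apply iter_le].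
Qed.

Lemma itinerary_code_unit_interval k x : 0 <= x < 1 ->
  (itinerary_code F K k x <= itinerary_code F K k 0 + Z.of_nat K)%Z.
Proof.
  intros Hx. unfold itinerary_code. rewrite <- Int_part_plus_IZR, <- INR_IZR_INZ.
  apply Int_part_le.
  pose proof (iter_le F HF k x (0 + IZR 1) ltac:(simpl; lra)) as Hle.
  rewrite iter_plus_IZR in Hle by exact HF. simpl in Hle. pose proof (pos_INR K). nra.
Qed.

Lemma itinerary_sum_le n x y : x <= y -> (itinerary_sum F K n x <= itinerary_sum F K n y)%Z.
Proof.
  intros Hxy. induction n as [|n IHn]; simpl; [lia |].
  pose proof (itinerary_code_le n x y Hxy). lia.
Qed.

Lemma itinerary_sum_unit_interval n x : 0 <= x < 1 ->
  (itinerary_sum F K n 0 <= itinerary_sum F K n x <= itinerary_sum F K n 0 + Z.of_nat (n * K))%Z.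
Proof.
  intros Hx. induction n as [|n IHn]; simpl; [lia |].
  pose proof (itinerary_code_unit_interval n x Hx).
  pose proof (itinerary_code_le n 0 x ltac:(lra)). lia.
Qed.

Lemma itinerary_sum_eq n x y : x <= y -> itinerary_sum F K n x = itinerary_sum F K n y ->
  forall k, (k < n)%nat -> itinerary_code F K k x = itinerary_code F K k y.
Proof.
  intros Hxy. induction n as [|n IHn]; intros E k Hk; [lia |]. simpl in E.
  pose proof (itinerary_sum_le n x y Hxy). pose proof (itinerary_code_le n x y Hxy).
  destruct (Nat.eq_dec k n) as [-> | Hkn]; [lia | apply IHn; lia].
Qed.

Lemma itinerary_code_eq_close k x y : (0 < K)%nat ->
  itinerary_code F K k x = itinerary_code F K k y -> Rabs (Nat.iter k F x - Nat.iter k F y) < / INR K.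
Proof.
  intros HK E. unfold itinerary_code in E.
  pose proof (Int_part_bound (INR K * Nat.iter k F x)) as Bx.
  pose proof (Int_part_bound (INR K * Nat.iter k F y)) as By. rewrite E in Bx.
  assert (0 < INR K) by (apply lt_0_INR; lia).
  apply Rabs_def1; apply Rmult_lt_reg_l with (INR K); try assumption;
    [rewrite Rinv_r | rewrite Ropp_mult_distr_r_reverse, Rinv_r]; lra.
Qed.

Lemma covers_itinerary n eps : (0 < K)%nat -> / INR K < eps -> covers F n eps (n * K + 1).
Proof.
  intros HK HKeps. assert (Heps : 0 < eps) by (pose proof (Rinv_0_lt_compat _ (lt_0_INR K HK)); lra).
  set (total := itinerary_sum F K n).
  set (rep := fun s => epsilon (inhabits 0) (fun c => 0 <= c < 1 /\ total c = s)).
  exists (map (fun i => rep (total 0%R + Z.of_nat i)%Z) (seq 0 (n * K + 1))).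
  split; [now rewrite length_map, length_seq |].
  intros x. set (x' := x - IZR (Int_part x)). pose proof (Int_part_bound x).
  assert (Hx' : 0 <= x' < 1) by (unfold x'; lra).
  pose proof (itinerary_sum_unit_interval n x' Hx') as Hrange.
  set (c := rep (total x')).
  assert (Hc : 0 <= c < 1 /\ total c = total x') by (apply epsilon_spec; now exists x').
  exists c. split.
  - apply in_map_iff. exists (Z.to_nat (total x' - total 0%R)). split.
    + unfold c. f_equal. fold total in Hrange. lia.
    + apply in_seq. fold total in Hrange. lia.
  - replace x with (x' + IZR (Int_part x)) by (unfold x'; ring).
    rewrite dn_plus_IZR_l by exact HF. apply dn_lt_iff; [exact Heps |]. intros k Hk.
    assert (Hcode : itinerary_code F K k x' = itinerary_code F K k c).
    { destruct Hc as [_ Hc]. destruct (Rle_or_lt x' c).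
      - now apply (itinerary_sum_eq n).
      - symmetry. apply (itinerary_sum_eq n); [lra | exact Hc | exact Hk]. }
    pose proof (itinerary_code_eq_close k x' c HK Hcode).
    pose proof (dT_le_Rabs (Nat.iter k F x') (Nat.iter k F c)). lra.
Qed.

End Itinerary.

Lemma Gn_spec F n eps : (exists N, covers F n eps N) ->
  covers F n eps (Gn F n eps) /\ forall M, covers F n eps M -> (Gn F n eps <= M)%nat.
Proof.
  intros Hex. unfold Gn. apply epsilon_spec.
  destruct (dec_inh_nat_subset_has_unique_least_element _ (fun N => classic _) Hex)
    as [N [HN _]].
  now exists N.
Qed.

Lemma Gn_wandering_bounds F x y eps K n : op_circle_homeo_lift F -> wandering_interval F x y ->
  2 * eps <= y - x -> (0 < K)%nat -> / INR K < eps -> (n <= Gn F n eps <= n * K + 1)%nat.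
Proof.
  intros HF Hw Hxy HK HKeps.
  assert (Heps : 0 < eps) by (pose proof (Rinv_0_lt_compat _ (lt_0_INR K HK)); lra).
  pose proof (covers_itinerary F HF K n eps HK HKeps) as Hcov.
  destruct (Gn_spec F n eps (ex_intro _ _ Hcov)) as [HG Hmin].
  split; [exact (covers_ge_of_wandering F x y eps n _ HF Hw Heps Hxy HG) | exact (Hmin _ Hcov)].
Qed.

Lemma is_lim_seq_one_plus_div_ln c : is_lim_seq (fun n => 1 + c / ln (INR n)) 1.
Proof.
  replace (Finite 1) with (Finite (1 + c * 0)) by (f_equal; ring).
  apply is_lim_seq_plus'; [apply is_lim_seq_const |].
  apply (is_lim_seq_scal_l _ c 0).
  apply (is_lim_seq_inv _ p_infty); [| discriminate].
  eapply filterlim_comp; [apply is_lim_seq_INR | apply is_lim_ln_p].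
Qed.

Lemma hpol_eps_of_linear_bounds F eps (C : R) : 1 <= C ->
  (forall n, (1 <= n)%nat -> INR n <= INR (Gn F n eps) <= C * INR n) -> hpol_eps F eps = Finite 1.
Proof.
  intros HC Hbounds. unfold hpol_eps. apply is_LimSup_seq_unique, is_lim_LimSup_seq.
  apply (is_lim_seq_le_le_loc (fun _ => 1) _ (fun n => 1 + ln C / ln (INR n)));
    [| apply is_lim_seq_const | apply is_lim_seq_one_plus_div_ln].
  exists 2%nat. intros n Hn. destruct (Hbounds n ltac:(lia)) as [Hlo Hhi].
  assert (Hn1 : 1 < INR n) by (apply (lt_INR 1); lia).
  assert (Hln : 0 < ln (INR n)) by (rewrite <- ln_1; apply ln_increasing; lra).
  assert (Llo : ln (INR n) <= ln (INR (Gn F n eps))) by (apply ln_le; lra).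
  assert (Lhi : ln (INR (Gn F n eps)) <= ln C + ln (INR n)).
  { rewrite <- ln_mult by lra. apply ln_le; lra. }
  unfold Rdiv. split.
  - apply Rmult_le_reg_r with (ln (INR n)); [exact Hln |].
    rewrite Rmult_assoc, Rinv_l by lra. lra.
  - apply Rmult_le_reg_r with (ln (INR n)); [exact Hln |].
    rewrite Rmult_plus_distr_r, !Rmult_assoc, Rinv_l by lra. lra.
Qed.

Lemma hpol_eps_wandering F x y eps : op_circle_homeo_lift F -> wandering_interval F x y ->
  0 < eps -> 2 * eps <= y - x -> hpol_eps F eps = Finite 1.
Proof.
  intros HF Hw Heps Hxy.
  destruct (archimed_cor1 eps Heps) as [K [HKeps HK]].
  apply (hpol_eps_of_linear_bounds F eps (INR K + 1)); [pose proof (pos_INR K); lra |].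
  intros n Hn. destruct (Gn_wandering_bounds F x y eps K n HF Hw Hxy HK HKeps) as [Hlo Hhi].
  apply le_INR in Hlo, Hhi. rewrite plus_INR, mult_INR in Hhi. simpl in Hhi.
  split; [exact Hlo |].
  assert (1 <= INR n) by (apply (le_INR 1); exact Hn). nra.
Qed.

Theorem proposition3p3 (F : R -> R) (rho : R) :
  op_circle_homeo_lift F ->
  is_lim_seq (fun n => Nat.iter n F 0 / INR n) rho ->
  (~ exists p q : Z, q <> 0%Z /\ rho = IZR p / IZR q) ->
  ~ conj_to_rotation F ->
  hpol_eq F 1.
Proof.
  intros HF Hrho Hirr Hnc.
  destruct (not_conj_wandering_interval F rho HF Hrho Hirr Hnc) as [x [y [Hxy Hw]]].
  intros delta Hdelta. exists ((y - x) / 2). split; [lra |].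
  intros eps [Heps Heps0]. exists 1. split.
  - apply (hpol_eps_wandering F x y); [assumption .. | lra].
  - rewrite Rminus_diag, Rabs_R0. exact Hdelta.
Qed.
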